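(* Consider the controlled impulsive system $\dot x(t)=Ax(t)+B_cu_c(t)$ for $t\ne t_k$, $x(t_k^+)=Jx(t_k)+B_du_d(t_k)$, with $A,J\in\mathbb{R}^{n\times n}$, $B_c\in\mathbb{R}^{n\times m_c}$, $B_d\in\mathbb{R}^{n\times m_d}$, and let $\bar T>0$. Assume there exist a continuously differentiable diagonal-matrix-valued function $X:[0,\bar T]\to\mathbb{D}^n$ with $X(\tau)$ nonsingular for all $\tau$ and $X(0)\in\mathbb{D}^n_{\succ0}$, a continuous $U:[0,\bar T]\to\mathbb{R}^{m_c\times n}$, a matrix $U_d\in\mathbb{R}^{m_d\times n}$ and scalars $\varepsilon,\alpha>0$ such that, for all $\tau\in[0,\bar T]$, $AX(\tau)+B_cU(\tau)+\alpha I_n\ge0$, $JX(\bar T)+B_dU_d\ge0$, $\big[-\dot X(\tau)+AX(\tau)+B_cU(\tau)\big]\mathbf{1}_n<0$ and $\big[JX(\bar T)+B_dU_d-X(0)+\varepsilon I_n\big]\mathbf{1}_n\le0$. Define $K_c(\tau)=U(\tau)X(\tau)^{-1}$ and $K_d=U_dX(\bar T)^{-1}$ and the controller $u_c(t_k+\tau)=K_c(\tau)x(t_k+\tau)$ for $\tau\in(0,\bar T]$, $u_d(t_k)=K_dx(t_k)$. Then $A+B_cK_c(\tau)$ is Metzler for all $\tau\in[0,\bar T]$, $J+B_dK_d$ is nonnegative, $\big[(J+B_dK_d)\Psi(\bar T)-I_n\big]X(0)\mathbf{1}_n<0$ where $\frac{d}{ds}\Psi(s)=(A+B_cK_c(s))\Psi(s)$,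 $\Psi(0)=I_n$, and the closed-loop system is positive and asymptotically stable under constant dwell-time $\bar T$.
   Context: $\mathbb{D}^n$ is the set of $n\times n$ diagonal matrices and $\mathbb{D}^n_{\succ0}$ those with positive diagonal entries. Matrix/vector inequalities are entrywise; $\mathbf{1}_n$ is the vector of ones. $x(t^+)=\lim_{s\downarrow t}x(s)$. A matrix is Metzler if its off-diagonal entries are nonnegative. Constant dwell-time $\bar T$ means $t_{k+1}-t_k=\bar T$ for all $k$; asymptotic stability means global asymptotic stability of the zero solution. *)

(* classical reals.  Matrices are represented as functions
   nat -> nat -> R, only the entries with indices below the relevant
   dimensions matter; vectors as nat -> R. *)
From Stdlib Require Import Reals Lra Lia.
Open Scope R_scope.

Fixpoint rsum (p : nat) (f : nat -> R) : R :=
  match p with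
  | O => 0
  | S q => rsum q f + f q
  end.

Definition Mat := nat -> nat -> R.
Definition Vec := nat -> R.

Definition mmul (p : nat) (A B : Mat) : Mat :=
  fun i j => rsum p (fun k => A i k * B k j).
Definition madd (A B : Mat) : Mat := fun i j => A i j + B i j.
Definition msub (A B : Mat) : Mat := fun i j => A i j - B i j.
Definition mscal (c : R) (A : Mat) : Mat := fun i j => c * A i j.
Definition Id : Mat := fun i j => if Nat.eqb i j then 1 else 0.
Definition mvec (p : nat) (A : Mat) (v : Vec) : Vec :=
  fun i => rsum p (fun j => A i j * v j).
Definition ones : Vec := fun _ => 1.

Definition is_diag (n : nat) (X : Mat) : Prop :=
  forall i j, (i < n)%nat -> (j < n)%nat -> i <> j -> X i j = 0.
Definition diag_inv (X : Mat) : Mat :=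
  fun i j => if Nat.eqb i j then / X i i else 0.

Definition mat_nonneg (m p : nat) (A : Mat) : Prop :=
  forall i j, (i < m)%nat -> (j < p)%nat -> 0 <= A i j.
Definition metzler (n : nat) (A : Mat) : Prop :=
  forall i j, (i < n)%nat -> (j < n)%nat -> i <> j -> 0 <= A i j.
Definition vec_neg (n : nat) (v : Vec) : Prop :=
  forall i, (i < n)%nat -> v i < 0.
Definition vec_nonpos (n : nat) (v : Vec) : Prop :=
  forall i, (i < n)%nat -> v i <= 0.

Definition deriv_within (D : R -> Prop) (f : R -> R) (x l : R) : Prop :=
  limit1_in (fun h => (f h - f x) / (h - x)) (fun h => D h /\ h <> x) l x.
Definition cont_within (D : R -> Prop) (f : R -> R) (x : R) : Prop :=
  limit1_in f D (f x) x.

Definition Icc (a b : R) : R -> Prop := fun t => a <= t <= b.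

Definition vnorm (n : nat) (v : Vec) : R := rsum n (fun i => Rabs (v i)).

(* Solutions of the closed-loop impulsive system with impulse times
   t_k = k * T (k = 0,1,2,...):
     xdot(t) = Ac(t - t_k) x(t)   for t in (t_k, t_k + T],
     x(t_k^+) = Jd x(t_k).
   x(t_k) denotes the (left-continuous) value before the jump. *)
Definition closed_loop_sol (n : nat) (Ac : R -> Mat) (Jd : Mat) (T : R)
  (x : R -> Vec) : Prop :=
  forall k : nat,
    (forall i, (i < n)%nat ->
       limit1_in (fun t => x t i) (fun t => INR k * T < t)
                 (mvec n Jd (x (INR k * T)) i) (INR k * T)) /\
    (forall t, INR k * T < t <= INR k * T + T ->
     forall i, (i < n)%nat ->
       deriv_within (fun s => INR k * T < s <= INR k * T + T)
                    (fun s => x s i) t (mvec n (Ac (t - INR k * T)) (x t) i)).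

Definition closed_loop_positive (n : nat) (Ac : R -> Mat) (Jd : Mat) (T : R)
  : Prop :=
  forall x, closed_loop_sol n Ac Jd T x ->
    (forall i, (i < n)%nat -> 0 <= x 0 i) ->
    forall t, 0 <= t -> forall i, (i < n)%nat -> 0 <= x t i.

Definition closed_loop_GAS (n : nat) (Ac : R -> Mat) (Jd : Mat) (T : R)
  : Prop :=
  (forall eps, 0 < eps -> exists delta, 0 < delta /\
     forall x, closed_loop_sol n Ac Jd T x -> vnorm n (x 0) < delta ->
       forall t, 0 <= t -> vnorm n (x t) < eps) /\
  (forall x, closed_loop_sol n Ac Jd T x ->
     forall eps, 0 < eps -> exists T0, forall t, T0 <= t -> vnorm n (x t) < eps).

(* With K_c = U X^-1 and K_d = U_d X(T)^-1 the hypotheses say that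
   A_c(tau) = A + B_c K_c(tau) is Metzler, J_d = J + B_d K_d is nonnegative,
   v(tau) := X(tau) 1 satisfies A_c(tau) v(tau) < v'(tau), and
   J_d v(T) <= v(0) - eps 1.  By the comparison principle for cooperative
   systems a flow solution bounded by c v(0) at the start of a dwell interval
   stays bounded by c v(tau); the next jump maps c v(T) below
   c (v(0) - eps 1) <= c rho v(0) with rho = 1 - eps / (eps + sum v(0)) < 1.
   This gives positivity, the monodromy inequality (for the solution
   Psi(tau) v(0)) and geometric decay of all trajectories. *)

From Stdlib Require Import Reals Lra Lia Classical.
Open Scope R_scope.

(** * Limits, continuity and derivatives within a set *)

Lemma limit1_in_iff f D l x0 : limit1_in f D l x0 <->
  forall e, 0 < e -> exists alp, 0 < alp /\
    forall h, D h -> Rabs (h - x0) < alp -> Rabs (f h - l) < e.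
Proof.
  unfold limit1_in, limit_in; simpl; unfold Rdist; split.
  - intros H e He. destruct (H e He) as [alp [Ha H1]]. exists alp; split; auto.
  - intros H e He. destruct (H e He) as [alp [Ha H1]]. exists alp; split; auto.
    intros h [Dh Hh]; auto.
Qed.

(* Translation by [s] of the variable, on a neighbourhood of radius [r]. *)
Lemma limit1_in_transport f g D E l x0 y0 s r :
  limit1_in f D l x0 -> 0 < r -> y0 + s = x0 ->
  (forall h, E h -> Rabs (h - y0) < r -> D (h + s) /\ g h = f (h + s)) ->
  limit1_in g E l y0.
Proof.
  rewrite !limit1_in_iff. intros H Hr Hy HE e He.
  destruct (H e He) as [alp [Ha H1]]. exists (Rmin alp r); split.
  - apply Rmin_pos; auto.
  - intros h Eh Hh. destruct (HE h Eh) as [D1 ->].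
    + eapply Rlt_le_trans; [exact Hh | apply Rmin_r].
    + apply H1; auto.
      replace (h + s - x0) with (h - y0) by (rewrite <- Hy; ring).
      eapply Rlt_le_trans; [exact Hh | apply Rmin_l].
Qed.

Lemma limit1_in_const D c x0 : limit1_in (fun _ => c) D c x0.
Proof.
  rewrite limit1_in_iff. intros e He. exists 1; split; [lra |].
  intros. rewrite Rminus_diag, Rabs_R0; auto.
Qed.

Lemma cont_within_limit D E f x :
  cont_within D f x ->
  (exists r, 0 < r /\ forall h, E h -> Rabs (h - x) < r -> D h) ->
  limit1_in f E (f x) x.
Proof.
  intros Hc [r [Hr HE]].
  apply (limit1_in_transport f f D E (f x) x x 0 r Hc Hr ltac:(ring)).
  intros h Eh Hh. rewrite Rplus_0_r. auto.
Qed.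

Lemma cont_within_pos_near D f t : cont_within D f t -> 0 < f t ->
  exists alp, 0 < alp /\ forall h, D h -> Rabs (h - t) < alp -> 0 < f h.
Proof.
  unfold cont_within. rewrite limit1_in_iff. intros Hc Hp.
  destruct (Hc _ Hp) as [alp [Ha H]]. exists alp; split; auto.
  intros h Dh Hh. specialize (H h Dh Hh). apply Rabs_def2 in H. lra.
Qed.

Lemma cont_within_neg_near D f t : cont_within D f t -> f t < 0 ->
  exists alp, 0 < alp /\ forall h, D h -> Rabs (h - t) < alp -> f h < 0.
Proof.
  intros Hc Hn.
  destruct (cont_within_pos_near D (fun h => - f h) t (limit_Ropp _ _ _ _ Hc))
    as [alp [Ha H]]; [lra |].
  exists alp; split; auto. intros h Dh Hh. specialize (H h Dh Hh). lra.
Qed.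

Lemma left_point a t alp : a < t -> 0 < alp ->
  exists s, a < s < t /\ Rabs (s - t) < alp.
Proof.
  intros Hat Ha. exists (t - Rmin alp (t - a) / 2).
  pose proof (Rmin_l alp (t - a)). pose proof (Rmin_r alp (t - a)).
  assert (0 < Rmin alp (t - a)) by (apply Rmin_pos; lra).
  rewrite Rabs_left1; lra.
Qed.

Lemma right_point t b alp : t < b -> 0 < alp ->
  exists s, t < s < b /\ Rabs (s - t) < alp.
Proof.
  intros Htb Ha. exists (t + Rmin alp (b - t) / 2).
  pose proof (Rmin_l alp (b - t)). pose proof (Rmin_r alp (b - t)).
  assert (0 < Rmin alp (b - t)) by (apply Rmin_pos; lra).
  rewrite Rabs_right; lra.
Qed.

Lemma Icc_induction a b (S : R -> Prop) : a <= b -> S a ->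
  (forall t, a <= t < b -> (forall s, a <= s <= t -> S s) ->
     exists d, 0 < d /\ forall s, t < s < t + d -> S s) ->
  (forall t, a < t <= b -> (forall s, a <= s < t -> S s) -> S t) ->
  forall t, Icc a b t -> S t.
Proof.
  intros Hab Sa Hfw Hcl.
  set (E := fun t => a <= t <= b /\ forall s, a <= s <= t -> S s).
  assert (Ea : E a).
  { split; [lra |]. intros s Hs. replace s with a by lra; auto. }
  destruct (completeness E) as [m [Hub Hlub]].
  { exists b. intros t [Ht _]. lra. }
  { exists a. exact Ea. }
  assert (Ham : a <= m) by (apply Hub, Ea).
  assert (Hmb : m <= b) by (apply Hlub; intros t [Ht _]; lra).
  assert (Hbelow : forall s, a <= s < m -> S s).
  { intros s Hs. apply NNPP. intros HnS.
    assert (m <= s); [| lra]. apply Hlub. intros t [Ht Hall].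
    destruct (Rle_or_lt t s); auto. exfalso. apply HnS, Hall. lra. }
  assert (Hall : forall s, a <= s <= m -> S s).
  { intros s Hs. destruct (Req_dec s m) as [-> | Hsm]; [| apply Hbelow; lra].
    destruct (Req_dec m a) as [-> | Hma]; auto. apply Hcl; [lra | auto]. }
  assert (Hmb' : m = b).
  { destruct (Req_dec m b) as [| Hne]; auto. exfalso.
    destruct (Hfw m ltac:(lra) Hall) as [d [Hd Hs]].
    assert (Et : E (Rmin (m + d / 2) b)).
    { pose proof (Rmin_l (m + d / 2) b). pose proof (Rmin_r (m + d / 2) b).
      split; [split; [apply Rmin_glb |]; lra |].
      intros s Hs'. destruct (Rle_or_lt s m); [apply Hall | apply Hs]; lra. }
    pose proof (Hub _ Et). unfold Rmin in *.
    destruct (Rle_dec (m + d / 2) b); lra. }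
  intros t Ht. apply Hall. unfold Icc in Ht. lra.
Qed.

Lemma pos_of_nonvanishing a b f : a <= b ->
  (forall t, Icc a b t -> cont_within (Icc a b) f t) ->
  (forall t, Icc a b t -> f t <> 0) -> 0 < f a ->
  forall t, Icc a b t -> 0 < f t.
Proof.
  intros Hab Hc Hnz Ha. apply Icc_induction; auto.
  - intros t Ht Hall.
    destruct (cont_within_pos_near _ _ _ (Hc t ltac:(unfold Icc; lra))
      (Hall t ltac:(lra))) as [alp [Hal H]].
    exists (Rmin alp (b - t)); split; [apply Rmin_pos; lra |].
    intros s Hs. pose proof (Rmin_l alp (b - t)). pose proof (Rmin_r alp (b - t)).
    apply H; [unfold Icc; lra | rewrite Rabs_right; lra].
  - intros t Ht Hall. assert (Ht' : Icc a b t) by (unfold Icc; lra).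
    destruct (Rlt_or_le 0 (f t)) as [| Hle]; auto. exfalso.
    assert (Hneg : f t < 0) by (pose proof (Hnz t Ht'); lra).
    destruct (cont_within_neg_near _ _ _ (Hc t Ht') Hneg) as [alp [Hal H]].
    destruct (left_point a t alp) as [s [Hs Hst]]; try lra.
    specialize (H s ltac:(unfold Icc; lra) Hst). specialize (Hall s ltac:(lra)). lra.
Qed.

Lemma cont_within_bounded_above a b f : a <= b ->
  (forall t, Icc a b t -> cont_within (Icc a b) f t) ->
  exists B, forall s, Icc a b s -> f s <= B.
Proof.
  intros Hab Hc.
  assert (Hnear : forall t, Icc a b t -> exists alp, 0 < alp /\
            forall h, Icc a b h -> Rabs (h - t) < alp -> f h < f t + 1).
  { intros t Ht. destruct (cont_within_pos_near (Icc a b) (fun h => f t + 1 - f h) t)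
      as [alp [Hal H]].
    - apply (limit_minus _ _ _ _ _ _ (limit1_in_const _ _ _) (Hc t Ht)).
    - lra.
    - exists alp; split; auto. intros h Dh Hh. specialize (H h Dh Hh). lra. }
  assert (H : forall t, Icc a b t -> exists B, forall s, a <= s <= t -> f s <= B).
  { apply Icc_induction; auto.
    - exists (f a). intros s Hs. replace s with a by lra. lra.
    - intros t Ht Hall. destruct (Hall t ltac:(lra)) as [B HB].
      destruct (Hnear t ltac:(unfold Icc; lra)) as [alp [Hal H1]].
      exists (Rmin alp (b - t)); split; [apply Rmin_pos; lra |].
      intros s Hs. exists (Rmax B (f t + 1)). intros r Hr.
      pose proof (Rmin_l alp (b - t)). pose proof (Rmin_r alp (b - t)).
      destruct (Rle_or_lt r t).
      + eapply Rle_trans; [apply HB; lra | apply Rmax_l].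
      + eapply Rle_trans; [| apply Rmax_r]. left.
        apply H1; [unfold Icc; lra | rewrite Rabs_right; lra].
    - intros t Ht Hall. destruct (Hnear t ltac:(unfold Icc; lra)) as [alp [Hal H1]].
      destruct (left_point a t alp) as [s0 [Hs0 Hs0t]]; try lra.
      destruct (Hall s0 ltac:(lra)) as [B HB]. exists (Rmax B (f t + 1)). intros r Hr.
      destruct (Rle_or_lt r s0).
      + eapply Rle_trans; [apply HB; lra | apply Rmax_l].
      + eapply Rle_trans; [| apply Rmax_r]. left.
        apply H1; [unfold Icc; lra |].
        rewrite Rabs_left1 in Hs0t |- *; lra. }
  destruct (H b ltac:(unfold Icc; lra)) as [B HB]. exists B.
  intros s Hs. apply HB. exact Hs.
Qed.

Lemma deriv_cont_within D f x l : deriv_within D f x l -> cont_within D f x.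
Proof.
  unfold deriv_within, cont_within. rewrite !limit1_in_iff. intros H e He.
  destruct (H 1 Rlt_0_1) as [alp [Ha H1]].
  assert (Hp : 0 < Rabs l + 1) by (pose proof (Rabs_pos l); lra).
  exists (Rmin alp (e / (Rabs l + 1))); split.
  { apply Rmin_pos; auto. apply Rdiv_lt_0_compat; auto. }
  intros h Dh Hh. destruct (Req_dec h x) as [-> | Hne].
  { rewrite Rminus_diag, Rabs_R0; auto. }
  assert (Hq : Rabs ((f h - f x) / (h - x) - l) < 1).
  { apply H1; [split; auto |]. eapply Rlt_le_trans; [exact Hh | apply Rmin_l]. }
  assert (Hh2 : Rabs (h - x) < e / (Rabs l + 1))
    by (eapply Rlt_le_trans; [exact Hh | apply Rmin_r]).
  assert (Hb : Rabs ((f h - f x) / (h - x)) <= Rabs l + 1).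
  { pose proof (Rabs_triang_inv ((f h - f x) / (h - x)) l). lra. }
  replace (f h - f x) with ((f h - f x) / (h - x) * (h - x)) by (field; lra).
  rewrite Rabs_mult.
  apply Rle_lt_trans with ((Rabs l + 1) * Rabs (h - x)).
  - apply Rmult_le_compat_r; auto. apply Rabs_pos.
  - apply (Rmult_lt_compat_l (Rabs l + 1)) in Hh2; auto.
    replace ((Rabs l + 1) * (e / (Rabs l + 1))) with e in Hh2 by (field; lra). lra.
Qed.

Lemma deriv_pos_increasing_right D f x l : deriv_within D f x l -> 0 < l ->
  exists alp, 0 < alp /\ forall h, D h -> x < h < x + alp -> f x < f h.
Proof.
  unfold deriv_within. rewrite limit1_in_iff. intros H Hl.
  destruct (H l Hl) as [alp [Ha H1]]. exists alp; split; auto.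
  intros h Dh Hh.
  assert (Hq : Rabs ((f h - f x) / (h - x) - l) < l).
  { apply H1; [split; [auto | lra] |]. rewrite Rabs_right; lra. }
  apply Rabs_def2 in Hq.
  assert (Hp : 0 < (f h - f x) / (h - x) * (h - x))
    by (apply Rmult_lt_0_compat; lra).
  replace ((f h - f x) / (h - x) * (h - x)) with (f h - f x) in Hp
    by (field; lra).
  lra.
Qed.

Lemma deriv_within_transport D E f g x y l s r :
  deriv_within D f x l -> 0 < r -> y + s = x ->
  (forall h, E h -> Rabs (h - y) < r -> D (h + s) /\ g h = f (h + s)) ->
  g y = f x ->
  deriv_within E g y l.
Proof.
  unfold deriv_within. intros H Hr Hy HE Hg.
  apply (limit1_in_transport _ _ _ _ l x y s r H Hr Hy).
  intros h [Eh Hne] Hh. destruct (HE h Eh Hh) as [D1 ->]. split.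
  - split; auto. lra.
  - rewrite Hg. f_equal. lra.
Qed.

Lemma deriv_within_subset D E f x l :
  deriv_within D f x l -> (forall h, E h -> D h) -> deriv_within E f x l.
Proof.
  intros H HE. apply (deriv_within_transport D E f f x x l 0 1 H Rlt_0_1);
    [ring | | reflexivity].
  intros h Eh _. rewrite Rplus_0_r. auto.
Qed.

Lemma deriv_within_lin D f g x l1 l2 c e :
  deriv_within D f x l1 -> deriv_within D g x l2 ->
  deriv_within D (fun h => c * f h + e * g h) x (c * l1 + e * l2).
Proof.
  unfold deriv_within. intros H1 H2.
  pose proof (limit_plus _ _ _ _ _ _
    (limit_mul _ _ _ _ _ _ (limit1_in_const _ c x) H1)
    (limit_mul _ _ _ _ _ _ (limit1_in_const _ e x) H2)) as M.
  apply (limit1_in_transport _ _ _ _ _ x x 0 1 M Rlt_0_1); [ring |].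
  intros h [Dh Hne] _. rewrite Rplus_0_r. split; [split; auto |].
  field. lra.
Qed.

Lemma deriv_within_ext D f g x l :
  deriv_within D f x l -> (forall h, f h = g h) -> deriv_within D g x l.
Proof.
  intros H He. apply (deriv_within_transport D D f g x x l 0 1 H Rlt_0_1);
    [ring | | symmetry; apply He].
  intros h Dh _. rewrite Rplus_0_r. auto.
Qed.

Lemma deriv_within_scal D f x l c :
  deriv_within D f x l -> deriv_within D (fun h => c * f h) x (c * l).
Proof.
  intros H. replace (c * l) with (c * l + 0 * l) by ring.
  apply (deriv_within_ext _ _ _ _ _ (deriv_within_lin D f f x l l c 0 H H)).
  intros; ring.
Qed.

Lemma deriv_within_zero D f x l :
  (forall alp, 0 < alp -> exists h, (D h /\ h <> x) /\ Rabs (h - x) < alp) ->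
  (forall h, D h -> f h = 0) -> D x -> deriv_within D f x l -> l = 0.
Proof.
  intros Hadh Hz Dx H. apply (single_limit (fun h => (f h - f x) / (h - x))
    (fun h => D h /\ h <> x) _ _ x); [exact Hadh | exact H |].
  apply (limit1_in_transport _ _ _ _ 0 x x 0 1
    (limit1_in_const (fun h => D h /\ h <> x) 0 x) Rlt_0_1); [ring |].
  intros h [Dh Hne] _. rewrite Rplus_0_r, (Hz h Dh), (Hz x Dx).
  split; [split; auto |].
  unfold Rdiv. ring.
Qed.

(** * Finite sums and matrices *)

Lemma rsum_ext p f g : (forall k, (k < p)%nat -> f k = g k) -> rsum p f = rsum p g.
Proof.
  induction p; simpl; intros H; auto.
  rewrite IHp by (intros; apply H; lia). rewrite H by lia. auto.
Qed.

Lemma rsum_plus p f g : rsum p (fun k => f k + g k) = rsum p f + rsum p g.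
Proof. induction p; simpl; [ring |]. rewrite IHp; ring. Qed.

Lemma rsum_scal p c f : rsum p (fun k => c * f k) = c * rsum p f.
Proof. induction p; simpl; [ring |]. rewrite IHp; ring. Qed.

Lemma rsum_opp p f : rsum p (fun k => - f k) = - rsum p f.
Proof. induction p; simpl; [ring |]. rewrite IHp; ring. Qed.

Lemma rsum_const p c : rsum p (fun _ => c) = INR p * c.
Proof. induction p; simpl rsum; [simpl; ring |]. rewrite IHp, S_INR; ring. Qed.

Lemma rsum_le p f g : (forall k, (k < p)%nat -> f k <= g k) -> rsum p f <= rsum p g.
Proof.
  induction p; simpl; intros H; [lra |].
  pose proof (IHp (fun k Hk => H k ltac:(lia))). pose proof (H p ltac:(lia)). lra.
Qed.

Lemma rsum_nonneg p f : (forall k, (k < p)%nat -> 0 <= f k) -> 0 <= rsum p f.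
Proof.
  intros H. replace 0 with (rsum p (fun _ => 0)) by (rewrite rsum_const; ring).
  apply rsum_le; auto.
Qed.

Lemma rsum_single p f j : (j < p)%nat ->
  (forall k, (k < p)%nat -> k <> j -> f k = 0) -> rsum p f = f j.
Proof.
  induction p; intros Hj H; [lia |]. simpl.
  destruct (Nat.eq_dec j p) as [-> | Hne].
  - rewrite (rsum_ext p f (fun _ => 0)), rsum_const by (intros; apply H; lia). ring.
  - rewrite IHp, (H p) by (auto; lia). ring.
Qed.

Lemma rsum_swap p q F :
  rsum p (fun k => rsum q (fun j => F k j)) = rsum q (fun j => rsum p (fun k => F k j)).
Proof.
  induction p; simpl.
  - rewrite rsum_const; ring.
  - rewrite IHp, <- rsum_plus. auto.
Qed.

Lemma rsum_abs p f : Rabs (rsum p f) <= rsum p (fun k => Rabs (f k)).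
Proof.
  induction p; simpl; [rewrite Rabs_R0; lra |].
  eapply Rle_trans; [apply Rabs_triang | lra].
Qed.

Lemma rsum_ge_term p f j : (j < p)%nat -> (forall k, (k < p)%nat -> 0 <= f k) ->
  f j <= rsum p f.
Proof.
  induction p; intros Hj H; [lia |]. simpl.
  assert (0 <= rsum p f) by (apply rsum_nonneg; intros; apply H; lia).
  pose proof (H p ltac:(lia)).
  destruct (Nat.eq_dec j p) as [-> | Hne]; [lra |].
  assert (f j <= rsum p f) by (apply IHp; [lia | intros; apply H; lia]). lra.
Qed.

Lemma deriv_within_rsum D p (F : nat -> R -> R) (L : nat -> R) x :
  (forall j, (j < p)%nat -> deriv_within D (F j) x (L j)) ->
  deriv_within D (fun h => rsum p (fun j => F j h)) x (rsum p L).
Proof.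
  induction p; intros H; simpl.
  - unfold deriv_within.
    apply (limit1_in_transport _ _ _ _ 0 x x 0 1
      (limit1_in_const (fun h => D h /\ h <> x) 0 x) Rlt_0_1); [ring |].
    intros h Dh _. rewrite Rplus_0_r. split; auto. unfold Rdiv; ring.
  - replace (rsum p L + L p) with (1 * rsum p L + 1 * L p) by ring.
    apply (deriv_within_ext _ _ _ _ _ (deriv_within_lin D _ _ x _ _ 1 1
      (IHp (fun j Hj => H j ltac:(lia))) (H p ltac:(lia)))).
    intros; ring.
Qed.

Lemma common_pos_radius (n : nat) (P : nat -> R -> Prop) :
  (forall i d d', 0 < d' <= d -> P i d -> P i d') ->
  (forall i, (i < n)%nat -> exists d, 0 < d /\ P i d) ->
  exists d, 0 < d /\ forall i, (i < n)%nat -> P i d.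
Proof.
  intros Hm. induction n; intros H.
  - exists 1; split; [lra | intros; lia].
  - destruct IHn as [d1 [Hd1 H1]]; [intros; apply H; lia |].
    destruct (H n ltac:(lia)) as [d2 [Hd2 H2]].
    pose proof (Rmin_l d1 d2). pose proof (Rmin_r d1 d2).
    assert (0 < Rmin d1 d2) by (apply Rmin_pos; auto).
    exists (Rmin d1 d2); split; auto.
    intros i Hi. destruct (Nat.eq_dec i n) as [-> |].
    + apply Hm with d2; auto.
    + apply Hm with d1; [lra | apply H1; lia].
Qed.

Lemma common_upper_bound (n : nat) (P : nat -> R -> Prop) :
  (forall i d d', d <= d' -> P i d -> P i d') ->
  (forall i, (i < n)%nat -> exists d, P i d) ->
  exists d, forall i, (i < n)%nat -> P i d.
Proof.
  intros Hm. induction n; intros H.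
  - exists 0. intros; lia.
  - destruct IHn as [d1 H1]; [intros; apply H; lia |].
    destruct (H n ltac:(lia)) as [d2 H2].
    exists (Rmax d1 d2). intros i Hi. destruct (Nat.eq_dec i n) as [-> |].
    + apply Hm with d2; [apply Rmax_r | auto].
    + apply Hm with d1; [apply Rmax_l | apply H1; lia].
Qed.

Lemma Rle_0_of_perturbed y b : (forall d, 0 < d -> 0 <= y + d * b) -> 0 <= y.
Proof.
  intros H. destruct (Rle_or_lt 0 y); auto. exfalso.
  destruct (Rle_or_lt b 0).
  - specialize (H 1 Rlt_0_1). lra.
  - assert (Hd : 0 < - y / (2 * b)) by (apply Rdiv_lt_0_compat; lra).
    specialize (H _ Hd).
    replace (y + - y / (2 * b) * b) with (y / 2) in H by (field; lra). lra.
Qed.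

Lemma Rabs_le_inv a b : Rabs a <= b -> - b <= a <= b.
Proof.
  intros H. pose proof (Rle_abs a). pose proof (Rle_abs (- a)).
  rewrite Rabs_Ropp in *. lra.
Qed.

Lemma dwell_interval_index T t : 0 < T -> 0 < t ->
  exists k : nat, INR k * T < t <= INR k * T + T.
Proof.
  intros HT Ht.
  assert (Hg : forall (N : nat) t, 0 < t <= INR N * T ->
            exists k : nat, INR k * T < t <= INR k * T + T).
  { induction N; intros t0 Ht0; [simpl in Ht0; lra |].
    rewrite S_INR in Ht0. destruct (Rle_or_lt t0 (INR N * T)).
    - apply IHN; lra.
    - exists N. lra. }
  destruct (INR_unbounded (t / T)) as [N HN].
  apply (Hg N). split; auto.
  apply (Rmult_lt_compat_r T) in HN; auto.
  replace (t / T * T) with t in HN by (field; lra). lra.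
Qed.

Definition diagv (D : Mat) : Vec := fun i => D i i.

Lemma mvec_ext p M u w i : (forall j, (j < p)%nat -> u j = w j) ->
  mvec p M u i = mvec p M w i.
Proof. intros H. apply rsum_ext. intros j Hj. rewrite H; auto. Qed.

Lemma mvec_lin p M u w al be i :
  mvec p M (fun j => al * u j + be * w j) i = al * mvec p M u i + be * mvec p M w i.
Proof. unfold mvec. rewrite <- !rsum_scal, <- rsum_plus. apply rsum_ext. intros; ring. Qed.

Lemma mvec_madd p M N v i : mvec p (madd M N) v i = mvec p M v i + mvec p N v i.
Proof. unfold mvec, madd. rewrite <- rsum_plus. apply rsum_ext. intros; ring. Qed.

Lemma mvec_msub p M N v i : mvec p (msub M N) v i = mvec p M v i - mvec p N v i.
Proof.
  unfold mvec, msub, Rminus. rewrite <- rsum_opp, <- rsum_plus.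
  apply rsum_ext. intros; ring.
Qed.

Lemma mvec_mscal p c M v i : mvec p (mscal c M) v i = c * mvec p M v i.
Proof. unfold mvec, mscal. rewrite <- rsum_scal. apply rsum_ext. intros; ring. Qed.

Lemma mvec_assoc p M N v i : mvec p M (fun j => mvec p N v j) i = mvec p (mmul p M N) v i.
Proof.
  unfold mvec, mmul.
  transitivity (rsum p (fun j => rsum p (fun l => M i j * N j l * v l))).
  { apply rsum_ext; intros. rewrite <- rsum_scal. apply rsum_ext; intros; ring. }
  rewrite rsum_swap. apply rsum_ext; intros.
  rewrite Rmult_comm, <- rsum_scal. apply rsum_ext; intros; ring.
Qed.

Lemma mvec_diag n D v i : is_diag n D -> (i < n)%nat -> mvec n D v i = D i i * v i.
Proof.
  intros Hd Hi. apply (rsum_single n (fun j => D i j * v j)); auto.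
  intros k Hk Hne. rewrite Hd; auto. ring.
Qed.

Lemma is_diag_Id n : is_diag n Id.
Proof. intros i j _ _ Hne. unfold Id. apply Nat.eqb_neq in Hne. rewrite Hne. auto. Qed.

Lemma Id_diag i : Id i i = 1.
Proof. unfold Id. rewrite Nat.eqb_refl. auto. Qed.

Lemma mmul_diag_r n M D i j : is_diag n D -> (j < n)%nat -> mmul n M D i j = M i j * D j j.
Proof.
  intros Hd Hj. apply (rsum_single n (fun k => M i k * D k j)); auto.
  intros k Hk Hne. rewrite Hd; auto. ring.
Qed.

Lemma mmul_diag_inv_r n M D i j : (j < n)%nat -> mmul n M (diag_inv D) i j = M i j / D j j.
Proof.
  intros Hj. unfold mmul. rewrite (rsum_single n _ j); auto.
  - unfold diag_inv. rewrite Nat.eqb_refl. unfold Rdiv; ring.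
  - intros l Hl Hne. unfold diag_inv. apply Nat.eqb_neq in Hne. rewrite Hne. ring.
Qed.

Lemma mvec_mul_diag_ones n M D i : is_diag n D ->
  mvec n (mmul n M D) ones i = mvec n M (diagv D) i.
Proof.
  intros Hd. apply rsum_ext. intros j Hj.
  rewrite mmul_diag_r by auto. unfold ones, diagv. ring.
Qed.

Lemma feedback_gain_mul_diag n m A B W D i j : is_diag n D -> (j < n)%nat -> D j j <> 0 ->
  madd A (mmul m B (mmul n W (diag_inv D))) i j * D j j = madd (mmul n A D) (mmul m B W) i j.
Proof.
  intros Hd Hj Hx. unfold madd. rewrite (mmul_diag_r n A D) by auto.
  rewrite Rmult_plus_distr_r. f_equal. unfold mmul at 1 3.
  rewrite Rmult_comm, <- rsum_scal. apply rsum_ext. intros k Hk.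
  rewrite mmul_diag_inv_r by auto. field; auto.
Qed.

Lemma mvec_nonneg n M v i : mat_nonneg n n M -> (forall j, (j < n)%nat -> 0 <= v j) ->
  (i < n)%nat -> 0 <= mvec n M v i.
Proof. intros HM Hv Hi. apply rsum_nonneg. intros j Hj. apply Rmult_le_pos; auto. Qed.

Lemma mvec_metzler_nonneg n M z i : metzler n M -> (i < n)%nat -> z i = 0 ->
  (forall j, (j < n)%nat -> 0 <= z j) -> 0 <= mvec n M z i.
Proof.
  intros Hm Hi Hz Hp. apply rsum_nonneg. intros j Hj.
  destruct (Nat.eq_dec i j) as [-> | Hne]; [rewrite Hz; lra |].
  apply Rmult_le_pos; auto.
Qed.

Lemma mvec_scal_r p M c v i : mvec p M (fun j => c * v j) i = c * mvec p M v i.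
Proof. unfold mvec. rewrite <- rsum_scal. apply rsum_ext. intros; ring. Qed.

Lemma mvec_le_compat n M u v i : mat_nonneg n n M ->
  (forall j, (j < n)%nat -> u j <= v j) -> (i < n)%nat -> mvec n M u i <= mvec n M v i.
Proof. intros HM Huv Hi. apply rsum_le. intros j Hj. apply Rmult_le_compat_l; auto. Qed.

Lemma mvec_abs_le n M v i : mat_nonneg n n M -> (i < n)%nat ->
  Rabs (mvec n M v i) <= mvec n M (fun j => Rabs (v j)) i.
Proof.
  intros HM Hi. eapply Rle_trans; [apply rsum_abs |]. apply rsum_le. intros j Hj.
  rewrite Rabs_mult, (Rabs_right (M i j)) by (apply Rle_ge, HM; auto). lra.
Qed.

(* Comparison principle for cooperative systems: at a first zero of a
   component, the Metzler property forces a positive slope. *)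
Lemma metzler_comparison n a b (z : R -> Vec) (z0 : Vec) (d : R -> Vec) (M : R -> Mat) :
  a < b ->
  (forall i, (i < n)%nat -> 0 < z0 i) ->
  (forall i, (i < n)%nat -> limit1_in (fun s => z s i) (fun s => a < s) (z0 i) a) ->
  (forall t, a < t <= b -> forall i, (i < n)%nat ->
     deriv_within (fun s => a < s <= b) (fun s => z s i) t (d t i)) ->
  (forall t, a < t <= b -> metzler n (M t)) ->
  (forall t, a < t <= b -> forall i, (i < n)%nat -> mvec n (M t) (z t) i < d t i) ->
  forall t, a < t <= b -> forall i, (i < n)%nat -> 0 <= z t i.
Proof.
  intros Hab Hz0 Hlim Hder Hmet Hgt.
  assert (H : forall t, Icc a b t -> t = a \/ forall i, (i < n)%nat -> 0 <= z t i).
  { apply Icc_induction; [lra | auto | |].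
    - intros t Ht Hall.
      destruct (common_pos_radius n (fun i dd => forall s, t < s < t + dd -> 0 < z s i))
        as [dd [Hdd H1]].
      + intros i dd dd' Hd HP s Hs. apply HP. lra.
      + intros i Hi.
        assert (Hnear : exists alp, 0 < alp /\
                  forall s, a < s <= b -> t < s < t + alp -> 0 < z s i).
        { destruct (Req_dec t a) as [-> | Hta].
          - destruct (proj1 (limit1_in_iff _ _ _ _) (Hlim i Hi) _ (Hz0 i Hi))
              as [alp [Ha L]]. exists alp; split; auto.
            intros s Hs Hs'. specialize (L s ltac:(lra) ltac:(rewrite Rabs_right; lra)).
            apply Rabs_def2 in L. lra.
          - destruct (Hall t ltac:(lra)) as [| Hzt]; [lra |].
            assert (Hdt := Hder t ltac:(lra) i Hi).
            destruct (Req_dec (z t i) 0) as [Hz | Hz].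
            + assert (Hd : 0 < d t i).
              { eapply Rle_lt_trans; [| apply Hgt; auto; lra].
                apply mvec_metzler_nonneg; auto. apply Hmet; lra. }
              destruct (deriv_pos_increasing_right _ _ _ _ Hdt Hd) as [alp [Ha H1]].
              exists alp; split; auto. intros s Hs Hs'. rewrite <- Hz. auto.
            + destruct (cont_within_pos_near _ _ _ (deriv_cont_within _ _ _ _ Hdt))
                as [alp [Ha H1]]; [pose proof (Hzt i Hi); lra |].
              exists alp; split; auto. intros s Hs Hs'.
              apply H1; [auto | rewrite Rabs_right; lra]. }
        destruct Hnear as [alp [Ha H1]].
        exists (Rmin alp (b - t)); split; [apply Rmin_pos; lra |].
        intros s Hs. pose proof (Rmin_l alp (b - t)). pose proof (Rmin_r alp (b - t)).
        apply H1; lra.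
      + exists dd; split; auto. intros s Hs. right. intros i Hi. left. apply H1; auto.
    - intros t Ht Hall. right. intros i Hi.
      destruct (Rle_or_lt 0 (z t i)) as [| Hneg]; auto. exfalso.
      destruct (cont_within_neg_near _ _ _ (deriv_cont_within _ _ _ _ (Hder t Ht i Hi)) Hneg)
        as [alp [Ha H1]].
      destruct (left_point a t alp) as [s [Hs Hst]]; try lra.
      specialize (H1 s ltac:(lra) Hst).
      destruct (Hall s ltac:(lra)) as [| Hs']; [lra |]. specialize (Hs' i Hi). lra. }
  intros t Ht i Hi. destruct (H t ltac:(unfold Icc; lra)) as [| Hs]; [lra | auto].
Qed.

Lemma GAS_of_geometric_decay n Ac Jd T K rho : 0 < T -> 0 <= K -> 0 <= rho < 1 ->
  (forall x, closed_loop_sol n Ac Jd T x -> forall (k : nat) t,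
     INR k * T < t <= INR k * T + T -> vnorm n (x t) <= K * vnorm n (x 0) * rho ^ k) ->
  closed_loop_GAS n Ac Jd T.
Proof.
  intros HT HK Hrho Hbound.
  assert (Hv0 : forall v, 0 <= vnorm n v)
    by (intros; apply rsum_nonneg; intros; apply Rabs_pos).
  assert (Hpow : forall k, 0 <= rho ^ k <= 1)
    by (intros k; split; [apply pow_le; lra | rewrite <- (pow1 k); apply pow_incr; lra]).
  split.
  - intros e He. exists (e / (K + 1)). split; [apply Rdiv_lt_0_compat; lra |].
    intros x Hx Hsmall t Ht.
    assert (HKe : (K + 1) * (e / (K + 1)) = e) by (field; lra).
    assert (Hx0 : vnorm n (x 0) <= e / (K + 1)) by lra.
    destruct (Req_dec t 0) as [-> | Ht0].
    + assert (e / (K + 1) <= e); [| lra].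
      pose proof (Rmult_le_compat_r (e / (K + 1)) 1 (K + 1)). nra.
    + destruct (dwell_interval_index T t HT ltac:(lra)) as [k Hk].
      pose proof (Hbound x Hx k t Hk). pose proof (Hpow k).
      assert (0 <= K * vnorm n (x 0)) by (apply Rmult_le_pos; auto).
      assert (K * vnorm n (x 0) * rho ^ k <= K * vnorm n (x 0)) by nra.
      assert (K * vnorm n (x 0) <= K * (e / (K + 1))) by nra.
      nra.
  - intros x Hx e He.
    set (W := K * vnorm n (x 0) + 1).
    assert (HW : 0 < W) by (pose proof (Hv0 (x 0)); unfold W; nra).
    destruct (pow_lt_1_zero rho ltac:(rewrite Rabs_right; lra) (e / W)
                (Rdiv_lt_0_compat _ _ He HW)) as [N HN].
    exists (INR N * T + T). intros t Ht.
    assert (HN0 : 0 <= INR N * T) by (apply Rmult_le_pos; [apply pos_INR | lra]).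
    destruct (dwell_interval_index T t HT ltac:(lra)) as [k Hk].
    assert (HkN : (k >= N)%nat).
    { destruct (Compare_dec.le_lt_dec N k); auto. exfalso.
      assert (INR (S k) <= INR N) by (apply le_INR; lia).
      rewrite S_INR in H. nra. }
    specialize (HN k HkN). rewrite Rabs_right in HN by (apply Rle_ge, Hpow).
    assert (W * rho ^ k < e).
    { apply (Rmult_lt_compat_l W) in HN; auto.
      replace (W * (e / W)) with e in HN by (field; lra). lra. }
    pose proof (Hbound x Hx k t Hk). pose proof (Hpow k). unfold W in *. nra.
Qed.

(** * The closed loop under the designed gains *)

Section DwellTimeStabilization.

Variables (n mc md : nat) (A J Bc Bd : Mat) (T : R) (X dX U : R -> Mat) (Ud : Mat)
  (eps alpha : R).

Hypothesis T_pos : 0 < T.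
Hypothesis X_diag : forall tau, Icc 0 T tau -> is_diag n (X tau).
Hypothesis X_deriv : forall tau, Icc 0 T tau -> forall i j, (i < n)%nat -> (j < n)%nat ->
  deriv_within (Icc 0 T) (fun s => X s i j) tau (dX tau i j).
Hypothesis X_nonsingular : forall tau, Icc 0 T tau -> forall i, (i < n)%nat -> X tau i i <> 0.
Hypothesis X0_pos : forall i, (i < n)%nat -> 0 < X 0 i i.
Hypothesis eps_pos : 0 < eps.
Hypothesis flow_gain_nonneg : forall tau, Icc 0 T tau ->
  mat_nonneg n n (madd (madd (mmul n A (X tau)) (mmul mc Bc (U tau))) (mscal alpha Id)).
Hypothesis jump_gain_nonneg : mat_nonneg n n (madd (mmul n J (X T)) (mmul md Bd Ud)).
Hypothesis flow_decrease : forall tau, Icc 0 T tau ->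
  vec_neg n (mvec n (madd (msub (mmul n A (X tau)) (dX tau)) (mmul mc Bc (U tau))) ones).
Hypothesis jump_decrease :
  vec_nonpos n (mvec n (madd (msub (madd (mmul n J (X T)) (mmul md Bd Ud)) (X 0))
                             (mscal eps Id)) ones).

Definition Acl (tau : R) : Mat := madd A (mmul mc Bc (mmul n (U tau) (diag_inv (X tau)))).
Definition Jcl : Mat := madd J (mmul md Bd (mmul n Ud (diag_inv (X T)))).

Lemma X_pos tau : Icc 0 T tau -> forall i, (i < n)%nat -> 0 < X tau i i.
Proof.
  intros Htau i Hi. revert tau Htau. apply pos_of_nonvanishing; [lra | | | auto].
  - intros t Ht. exact (deriv_cont_within _ _ _ _ (X_deriv t Ht i i Hi Hi)).
  - intros t Ht. auto.
Qed.

Lemma dX_diag tau : Icc 0 T tau -> is_diag n (dX tau).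
Proof.
  intros Htau i j Hi Hj Hij.
  apply (deriv_within_zero (Icc 0 T) (fun s => X s i j) tau); auto.
  - intros alp Ha. unfold Icc in *. destruct (Rlt_or_le tau T).
    + destruct (right_point tau T alp) as [h [Hh Hht]]; auto.
      exists h. repeat split; auto; lra.
    + destruct (left_point 0 tau alp) as [h [Hh Hht]]; auto; [lra |].
      exists h. repeat split; auto; lra.
  - intros h Hh. apply X_diag; auto.
Qed.

Lemma Acl_mul_X tau i j : Icc 0 T tau -> (j < n)%nat ->
  Acl tau i j * X tau j j = madd (mmul n A (X tau)) (mmul mc Bc (U tau)) i j.
Proof. intros Htau Hj. apply feedback_gain_mul_diag; auto. Qed.

Lemma Jcl_mul_X i j : (j < n)%nat ->
  Jcl i j * X T j j = madd (mmul n J (X T)) (mmul md Bd Ud) i j.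
Proof.
  intros Hj. assert (HT : Icc 0 T T) by (unfold Icc; lra).
  apply feedback_gain_mul_diag; auto.
Qed.

Lemma Acl_metzler tau : Icc 0 T tau -> metzler n (Acl tau).
Proof.
  intros Htau i j Hi Hj Hij. pose proof (X_pos tau Htau j Hj) as Hx.
  assert (H := flow_gain_nonneg tau Htau i j Hi Hj).
  unfold madd at 1, mscal in H. rewrite (is_diag_Id n i j), <- Acl_mul_X in H by auto.
  nra.
Qed.

Lemma Jcl_nonneg : mat_nonneg n n Jcl.
Proof.
  intros i j Hi Hj. pose proof (X_pos T ltac:(unfold Icc; lra) j Hj).
  pose proof (jump_gain_nonneg i j Hi Hj). rewrite <- Jcl_mul_X in * by auto. nra.
Qed.

Lemma X_supersolution tau i : Icc 0 T tau -> (i < n)%nat ->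
  mvec n (Acl tau) (diagv (X tau)) i < dX tau i i.
Proof.
  intros Htau Hi. assert (H := flow_decrease tau Htau i Hi).
  assert (E : mvec n (Acl tau) (diagv (X tau)) i
              = mvec n (madd (mmul n A (X tau)) (mmul mc Bc (U tau))) ones i).
  { apply rsum_ext. intros j Hj. rewrite <- Acl_mul_X by auto. unfold ones, diagv. ring. }
  rewrite E, !mvec_madd. rewrite mvec_madd, mvec_msub in H.
  rewrite (mvec_diag n (dX tau)) in H by (auto; apply dX_diag; auto).
  replace (dX tau i i * ones i) with (dX tau i i) in H by (unfold ones; ring). lra.
Qed.

Lemma Jcl_XT_le i : (i < n)%nat -> mvec n Jcl (diagv (X T)) i <= X 0 i i - eps.
Proof.
  intros Hi. assert (H := jump_decrease i Hi).
  assert (E : mvec n Jcl (diagv (X T)) i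
              = mvec n (madd (mmul n J (X T)) (mmul md Bd Ud)) ones i).
  { apply rsum_ext. intros j Hj. rewrite <- Jcl_mul_X by auto. unfold ones, diagv. ring. }
  rewrite mvec_madd, mvec_msub, mvec_mscal, <- E in H.
  rewrite (mvec_diag n (X 0)), (mvec_diag n Id), Id_diag in H
    by (auto; apply X_diag || apply is_diag_Id; unfold Icc; lra).
  unfold ones in H. lra.
Qed.

Lemma eps_le_X0 i : (i < n)%nat -> eps <= X 0 i i.
Proof.
  intros Hi. pose proof (Jcl_XT_le i Hi).
  assert (0 <= mvec n Jcl (diagv (X T)) i); [| lra].
  apply mvec_nonneg; auto; [apply Jcl_nonneg |].
  intros j Hj. left. apply X_pos; auto. unfold Icc; lra.
Qed.

(* [X(.)1] is a strict supersolution of the closed-loop flow, so every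
   solution starting below [c X(0)1] stays below [c X(.)1]. *)
Lemma flow_dominated a (y : R -> Vec) (y0 : Vec) c : 0 <= c ->
  (forall i, (i < n)%nat -> limit1_in (fun s => y s i) (fun s => a < s) (y0 i) a) ->
  (forall s, a < s <= a + T -> forall i, (i < n)%nat ->
     deriv_within (fun r => a < r <= a + T) (fun r => y r i) s
                  (mvec n (Acl (s - a)) (y s) i)) ->
  (forall i, (i < n)%nat -> 0 <= c * X 0 i i + y0 i) ->
  forall s, a < s <= a + T -> forall i, (i < n)%nat -> 0 <= c * X (s - a) i i + y s i.
Proof.
  intros Hc Hlim Hder Hinit s Hs i Hi.
  apply Rle_0_of_perturbed with (b := X (s - a) i i). intros dl Hdl.
  replace (c * X (s - a) i i + y s i + dl * X (s - a) i i)
    with ((c + dl) * X (s - a) i i + y s i) by ring.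
  apply (metzler_comparison n a (a + T) (fun r j => (c + dl) * X (r - a) j j + y r j)
    (fun j => (c + dl) * X 0 j j + y0 j)
    (fun r j => (c + dl) * dX (r - a) j j + 1 * mvec n (Acl (r - a)) (y r) j)
    (fun r => Acl (r - a))); auto; try lra.
  - intros j Hj. pose proof (Hinit j Hj). pose proof (X0_pos j Hj). nra.
  - intros j Hj.
    assert (XL : limit1_in (fun r => X (r - a) j j) (fun r => a < r) (X 0 j j) a).
    { apply (limit1_in_transport (fun r => X r j j) _ (Icc 0 T) _ _ 0 a (- a) T);
        [| lra | ring |].
      - exact (deriv_cont_within _ _ _ _ (X_deriv 0 ltac:(unfold Icc; lra) j j Hj Hj)).
      - intros h Hh Hr. rewrite Rabs_right in Hr by lra. unfold Icc.
        replace (h + - a) with (h - a) by ring. split; [lra | auto]. }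
    exact (limit_plus _ _ _ _ _ _
      (limit_mul _ _ _ _ _ _ (limit1_in_const _ (c + dl) a) XL) (Hlim j Hj)).
  - intros r Hr j Hj.
    apply (deriv_within_ext _ (fun h => (c + dl) * X (h - a) j j + 1 * y h j));
      [apply deriv_within_lin; [| apply Hder; auto] | intros; ring].
    apply (deriv_within_transport (Icc 0 T) _ (fun h => X h j j) _ (r - a) r _ (- a) 1);
      [apply X_deriv; unfold Icc; auto; lra | lra | ring | | f_equal; ring].
    intros h Hh _. replace (h + - a) with (h - a) by ring. unfold Icc. split; [lra | auto].
  - intros r Hr. apply Acl_metzler. unfold Icc; lra.
  - intros r Hr j Hj.
    rewrite (mvec_ext n _ _ (fun k => (c + dl) * diagv (X (r - a)) k + 1 * y r k)),
      mvec_lin by (intros; unfold diagv; ring).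
    pose proof (X_supersolution (r - a) j ltac:(unfold Icc; lra) Hj).
    apply (Rmult_lt_compat_l (c + dl)) in H; lra.
Qed.

Lemma monodromy_decrease (Psi : R -> Mat) :
  (forall i j, (i < n)%nat -> (j < n)%nat -> Psi 0 i j = Id i j) ->
  (forall s, Icc 0 T s -> forall i j, (i < n)%nat -> (j < n)%nat ->
     deriv_within (Icc 0 T) (fun r => Psi r i j) s (mmul n (Acl s) (Psi s) i j)) ->
  vec_neg n (mvec n (mmul n (msub (mmul n Jcl (Psi T)) Id) (X 0)) ones).
Proof.
  intros HP0 HPd i Hi.
  assert (X0_diag : is_diag n (X 0)) by (apply X_diag; unfold Icc; lra).
  set (w := fun s k => mvec n (Psi s) (diagv (X 0)) k).
  assert (Hw0 : forall k, (k < n)%nat -> w 0 k = X 0 k k).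
  { intros k Hk. transitivity (mvec n Id (diagv (X 0)) k).
    { apply rsum_ext. intros j Hj. rewrite HP0; auto. }
    rewrite mvec_diag, Id_diag by (auto; apply is_diag_Id). unfold diagv; ring. }
  assert (Hwd : forall s, Icc 0 T s -> forall k, (k < n)%nat ->
            deriv_within (Icc 0 T) (fun h => w h k) s (mvec n (Acl s) (w s) k)).
  { intros s Hs k Hk. unfold w. rewrite mvec_assoc.
    apply deriv_within_rsum. intros j Hj.
    apply (deriv_within_ext _ (fun h => diagv (X 0) j * Psi h k j)); [| intros; ring].
    rewrite Rmult_comm. apply deriv_within_scal. apply HPd; auto. }
  (* [Psi(.) X(0) 1] solves the closed-loop flow from [X(0) 1]. *)
  assert (HwT : forall k, (k < n)%nat -> w T k <= X T k k).
  { intros k Hk.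
    assert (H := flow_dominated 0 (fun s k => -1 * w s k) (fun k => -1 * X 0 k k) 1
                   ltac:(lra)).
    enough (0 <= 1 * X (T - 0) k k + -1 * w T k) by (rewrite Rminus_0_r in *; lra).
    apply H; auto; try lra.
    - intros j Hj. apply limit_mul; [apply limit1_in_const |]. rewrite <- Hw0 by auto.
      apply cont_within_limit with (D := Icc 0 T).
      + exact (deriv_cont_within _ _ _ _ (Hwd 0 ltac:(unfold Icc; lra) j Hj)).
      + exists T; split; auto. intros h Hh Hr. rewrite Rabs_right in Hr by lra.
        unfold Icc; lra.
    - intros s Hs j Hj. rewrite Rminus_0_r, mvec_scal_r.
      apply deriv_within_scal.
      apply (deriv_within_subset (Icc 0 T)); [apply Hwd; unfold Icc; auto; lra |].
      intros h Hh. unfold Icc. lra.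
    - intros j Hj. lra. }
  rewrite mvec_mul_diag_ones, mvec_msub, <- mvec_assoc, (mvec_diag n Id), Id_diag
    by (auto; apply is_diag_Id).
  fold (w T).
  assert (mvec n Jcl (w T) i <= mvec n Jcl (diagv (X T)) i)
    by (apply mvec_le_compat; auto; apply Jcl_nonneg).
  pose proof (Jcl_XT_le i Hi). unfold diagv. lra.
Qed.

Lemma sol_flow_dominated x (k : nat) c sg : closed_loop_sol n Acl Jcl T x -> 0 <= c ->
  (forall i, (i < n)%nat -> 0 <= c * X 0 i i + sg * mvec n Jcl (x (INR k * T)) i) ->
  forall t, INR k * T < t <= INR k * T + T -> forall i, (i < n)%nat ->
    0 <= c * X (t - INR k * T) i i + sg * x t i.
Proof.
  intros Hx Hc Hinit. destruct (Hx k) as [Hlim Hder].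
  apply (flow_dominated _ (fun s i => sg * x s i)
           (fun i => sg * mvec n Jcl (x (INR k * T)) i)); auto.
  - intros i Hi. exact (limit_mul _ _ _ _ _ _ (limit1_in_const _ sg _) (Hlim i Hi)).
  - intros s Hs i Hi. rewrite mvec_scal_r. apply deriv_within_scal. auto.
Qed.

Lemma closed_loop_positivity : closed_loop_positive n Acl Jcl T.
Proof.
  intros x Hx Hx0.
  assert (Hflow : forall (k : nat), (forall i, (i < n)%nat -> 0 <= x (INR k * T) i) ->
            forall t, INR k * T < t <= INR k * T + T -> forall i, (i < n)%nat -> 0 <= x t i).
  { intros k Hk t Ht i Hi.
    assert (H := sol_flow_dominated x k 0 1 Hx (Rle_refl 0)).
    enough (0 <= 0 * X (t - INR k * T) i i + 1 * x t i) by lra.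
    apply H; auto. intros j Hj.
    pose proof (mvec_nonneg n Jcl _ j Jcl_nonneg Hk Hj). lra. }
  assert (Hjumps : forall (k : nat) i, (i < n)%nat -> 0 <= x (INR k * T) i).
  { induction k.
    - simpl. rewrite Rmult_0_l. auto.
    - rewrite S_INR, Rmult_plus_distr_r, Rmult_1_l. intros i Hi.
      apply (Hflow k); auto; lra. }
  intros t Ht i Hi. destruct (Req_dec t 0) as [-> | Ht0]; auto.
  destruct (dwell_interval_index T t T_pos ltac:(lra)) as [k Hk]. eauto.
Qed.

Definition jump_rate : R := 1 - eps / (eps + rsum n (diagv (X 0))).

Lemma jump_rate_range : 0 <= jump_rate < 1.
Proof.
  assert (0 <= rsum n (diagv (X 0))) by (apply rsum_nonneg; intros; left; apply X0_pos; auto).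
  set (V := eps + rsum n (diagv (X 0))).
  assert (0 < eps / V) by (apply Rdiv_lt_0_compat; unfold V; lra).
  assert (eps / V <= 1).
  { apply (Rmult_le_reg_r V); [unfold V; lra |].
    replace (eps / V * V) with eps by (field; unfold V; lra). unfold V; lra. }
  unfold jump_rate. fold V. lra.
Qed.

Lemma jump_rate_contracts i : (i < n)%nat -> X 0 i i - eps <= jump_rate * X 0 i i.
Proof.
  intros Hi. pose proof (X0_pos i Hi). set (V := eps + rsum n (diagv (X 0))).
  assert (HXV : X 0 i i <= V).
  { pose proof (rsum_ge_term n (diagv (X 0)) i Hi (fun k Hk => Rlt_le _ _ (X0_pos k Hk))).
    unfold V. unfold diagv at 1 in H0. lra. }
  assert (eps / V * X 0 i i <= eps).
  { apply (Rmult_le_reg_r V); [lra |].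
    replace (eps / V * X 0 i i * V) with (eps * X 0 i i) by (field; lra).
    apply Rmult_le_compat_l; lra. }
  unfold jump_rate. fold V. lra.
Qed.

Lemma X_bounded : exists B, 0 <= B /\
  forall s, Icc 0 T s -> forall i, (i < n)%nat -> X s i i <= B.
Proof.
  destruct (common_upper_bound n (fun i B => forall s, Icc 0 T s -> X s i i <= B))
    as [B HB].
  - intros i B B' HBB' H s Hs. specialize (H s Hs). lra.
  - intros i Hi. apply cont_within_bounded_above; [lra |].
    intros t Ht. exact (deriv_cont_within _ _ _ _ (X_deriv t Ht i i Hi Hi)).
  - exists (Rmax B 0). split; [apply Rmax_r |].
    intros s Hs i Hi. eapply Rle_trans; [apply HB; auto | apply Rmax_l].
Qed.

Lemma sol_interval_bound x (k : nat) C : closed_loop_sol n Acl Jcl T x -> 0 <= C ->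
  (forall i, (i < n)%nat -> Rabs (mvec n Jcl (x (INR k * T)) i) <= C * X 0 i i) ->
  forall t, INR k * T < t <= INR k * T + T -> forall i, (i < n)%nat ->
    Rabs (x t i) <= C * X (t - INR k * T) i i.
Proof.
  intros Hx HC Hjump t Ht i Hi.
  assert (Hup := sol_flow_dominated x k C (-1) Hx HC).
  assert (Hlow := sol_flow_dominated x k C 1 Hx HC).
  enough (0 <= C * X (t - INR k * T) i i + -1 * x t i /\
          0 <= C * X (t - INR k * T) i i + 1 * x t i) by (apply Rabs_le; lra).
  split; [apply Hup | apply Hlow]; auto; intros j Hj; specialize (Hjump j Hj);
    apply Rabs_le_inv in Hjump; lra.
Qed.

Definition Jcl_sum : R := rsum n (fun i => rsum n (fun j => Jcl i j)).

Lemma Jcl_entry_le i j : (i < n)%nat -> (j < n)%nat -> Jcl i j <= Jcl_sum.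
Proof.
  intros Hi Hj. apply Rle_trans with (rsum n (fun j => Jcl i j)).
  - apply (rsum_ge_term n (fun j => Jcl i j)); auto. intros; apply Jcl_nonneg; auto.
  - apply (rsum_ge_term n (fun i => rsum n (fun j => Jcl i j))); auto.
    intros; apply rsum_nonneg; intros; apply Jcl_nonneg; auto.
Qed.

Lemma Jcl_sum_nonneg : 0 <= Jcl_sum.
Proof. apply rsum_nonneg; intros; apply rsum_nonneg; intros; apply Jcl_nonneg; auto. Qed.

Lemma sol_jump_bound x : closed_loop_sol n Acl Jcl T x -> forall (k : nat) i, (i < n)%nat ->
  Rabs (mvec n Jcl (x (INR k * T)) i)
    <= Jcl_sum * vnorm n (x 0) / eps * jump_rate ^ k * X 0 i i.
Proof.
  intros Hx. set (C := Jcl_sum * vnorm n (x 0) / eps).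
  pose proof jump_rate_range as Hrate.
  assert (HC : 0 <= C).
  { apply Rmult_le_pos; [| left; apply Rinv_0_lt_compat; auto].
    apply Rmult_le_pos; [apply Jcl_sum_nonneg |].
    apply rsum_nonneg; intros; apply Rabs_pos. }
  induction k; intros i Hi.
  - simpl. rewrite Rmult_0_l, Rmult_1_r.
    eapply Rle_trans; [apply mvec_abs_le; auto; apply Jcl_nonneg |].
    apply Rle_trans with (Jcl_sum * vnorm n (x 0)).
    + unfold vnorm. rewrite <- rsum_scal. apply rsum_le. intros j Hj.
      apply Rmult_le_compat_r; [apply Rabs_pos | apply Jcl_entry_le; auto].
    + replace (Jcl_sum * vnorm n (x 0)) with (C * eps) by (unfold C; field; lra).
      apply Rmult_le_compat_l; auto. apply eps_le_X0; auto.
  - assert (Hck : 0 <= C * jump_rate ^ k) by (apply Rmult_le_pos; auto; apply pow_le; lra).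
    assert (Hend := sol_interval_bound x k _ Hx Hck IHk (INR k * T + T)).
    replace (INR k * T + T - INR k * T) with T in Hend by ring.
    rewrite S_INR, Rmult_plus_distr_r, Rmult_1_l.
    eapply Rle_trans; [apply mvec_abs_le; auto; apply Jcl_nonneg |].
    apply Rle_trans with (mvec n Jcl (fun j => C * jump_rate ^ k * diagv (X T) j) i).
    { apply mvec_le_compat; auto; [apply Jcl_nonneg |]. intros j Hj. apply Hend; auto; lra. }
    rewrite mvec_scal_r. simpl.
    replace (C * (jump_rate * jump_rate ^ k) * X 0 i i)
      with (C * jump_rate ^ k * (jump_rate * X 0 i i)) by ring.
    apply Rmult_le_compat_l; auto.
    pose proof (Jcl_XT_le i Hi). pose proof (jump_rate_contracts i Hi). lra.
Qed.

Lemma sol_geometric_decay : exists K, 0 <= K /\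
  forall x, closed_loop_sol n Acl Jcl T x -> forall (k : nat) t,
    INR k * T < t <= INR k * T + T ->
    vnorm n (x t) <= K * vnorm n (x 0) * jump_rate ^ k.
Proof.
  destruct X_bounded as [B [HB HXB]].
  pose proof jump_rate_range as Hrate.
  exists (INR n * (Jcl_sum / eps) * B). split.
  { apply Rmult_le_pos; auto. apply Rmult_le_pos; [apply pos_INR |].
    apply Rmult_le_pos; [apply Jcl_sum_nonneg | left; apply Rinv_0_lt_compat; auto]. }
  intros x Hx k t Ht.
  set (C := Jcl_sum * vnorm n (x 0) / eps * jump_rate ^ k).
  assert (HC : 0 <= C).
  { apply Rmult_le_pos; [| apply pow_le; lra].
    apply Rmult_le_pos; [| left; apply Rinv_0_lt_compat; auto].
    apply Rmult_le_pos; [apply Jcl_sum_nonneg |].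
    apply rsum_nonneg; intros; apply Rabs_pos. }
  apply Rle_trans with (rsum n (fun _ => C * B)).
  - apply rsum_le. intros i Hi.
    eapply Rle_trans; [apply (sol_interval_bound x k C Hx HC); auto |].
    + intros j Hj. apply sol_jump_bound; auto.
    + apply Rmult_le_compat_l; auto. apply HXB; auto. unfold Icc; lra.
  - rewrite rsum_const. unfold C. right. field. lra.
Qed.

Lemma closed_loop_stable : closed_loop_GAS n Acl Jcl T.
Proof.
  destruct sol_geometric_decay as [K [HK Hdecay]].
  exact (GAS_of_geometric_decay n Acl Jcl T K jump_rate T_pos HK jump_rate_range Hdecay).
Qed.

End DwellTimeStabilization.

Theorem theorem7 (n mc md : nat) (A J Bc Bd : Mat) (T : R)
  (X dX U : R -> Mat) (Ud : Mat) (eps alpha : R) :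
  0 < T ->
  (forall tau, Icc 0 T tau -> is_diag n (X tau)) ->
  (forall tau, Icc 0 T tau -> forall i j, (i < n)%nat -> (j < n)%nat ->
     deriv_within (Icc 0 T) (fun s => X s i j) tau (dX tau i j)) ->
  (forall tau, Icc 0 T tau -> forall i j, (i < n)%nat -> (j < n)%nat ->
     cont_within (Icc 0 T) (fun s => dX s i j) tau) ->
  (forall tau, Icc 0 T tau -> forall i, (i < n)%nat -> X tau i i <> 0) ->
  (forall i, (i < n)%nat -> 0 < X 0 i i) ->
  (forall tau, Icc 0 T tau -> forall i j, (i < mc)%nat -> (j < n)%nat ->
     cont_within (Icc 0 T) (fun s => U s i j) tau) ->
  0 < eps -> 0 < alpha ->
  (forall tau, Icc 0 T tau ->
     mat_nonneg n n (madd (madd (mmul n A (X tau)) (mmul mc Bc (U tau)))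
                          (mscal alpha Id))) ->
  mat_nonneg n n (madd (mmul n J (X T)) (mmul md Bd Ud)) ->
  (forall tau, Icc 0 T tau ->
     vec_neg n (mvec n (madd (msub (mmul n A (X tau)) (dX tau))
                             (mmul mc Bc (U tau))) ones)) ->
  vec_nonpos n (mvec n (madd (msub (madd (mmul n J (X T)) (mmul md Bd Ud)) (X 0))
                             (mscal eps Id)) ones) ->
  let Kc := fun tau => mmul n (U tau) (diag_inv (X tau)) in
  let Kd := mmul n Ud (diag_inv (X T)) in
  let Ac := fun tau => madd A (mmul mc Bc (Kc tau)) in
  let Jd := madd J (mmul md Bd Kd) in
  (forall tau, Icc 0 T tau -> metzler n (Ac tau)) /\
  mat_nonneg n n Jd /\
  (forall Psi : R -> Mat,
     (forall i j, (i < n)%nat -> (j < n)%nat -> Psi 0 i j = Id i j) ->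
     (forall s, Icc 0 T s -> forall i j, (i < n)%nat -> (j < n)%nat ->
        deriv_within (Icc 0 T) (fun r => Psi r i j) s (mmul n (Ac s) (Psi s) i j)) ->
     vec_neg n (mvec n (mmul n (msub (mmul n Jd (Psi T)) Id) (X 0)) ones)) /\
  closed_loop_positive n Ac Jd T /\
  closed_loop_GAS n Ac Jd T.
Proof.
  intros HT Hdiag Hderiv _ Hnz HX0 _ Heps _ Hflow_gain Hjump_gain Hflow Hjump.
  intros Kc Kd Ac Jd.
  split; [| split; [| split; [| split]]].
  - eapply Acl_metzler; eassumption.
  - eapply Jcl_nonneg; eassumption.
  - eapply monodromy_decrease; eassumption.
  - eapply closed_loop_positivity; eassumption.
  - eapply closed_loop_stable; eassumption.
Qed.
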